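(* The $\mathcal{P}_+$-coadjoint orbit through $dT$ coincides with the affine subspace $dT+\mathfrak{U}_-^*\subset\mathfrak{b}_k^*$.
   Context: Let $\mathfrak{g}=\mathfrak{gl}_n(\mathbb{C})$, $\mathfrak{t}$ a Cartan subalgebra, $k>1$, $T=\sum_{i=1}^{k-1}T_iz^{-i}$, $T_i\in\mathfrak{t}$, $T_{k-1}\ne0$, $dT=\sum_i(-iT_i)z^{-i-1}dz$. $B_k=\{\sum_{i=0}^{k-1}b_iz^i:b_0=1,b_i\in\mathfrak{g}\}\subset\mathrm{GL}_n(\mathbb{C}[z]/(z^k))$; $\mathfrak{b}_k^*=\{\sum_{i=1}^{k-1}X_iz^{-i-1}dz:X_i\in\mathfrak{g}\}$ via $\mathrm{res}_{z=0}\mathrm{tr}$; coadjoint action $\mathrm{Ad}^*_bB$ = part of $bBb^{-1}$ in degrees $z^{-i-1}dz$, $1\le i\le k-1$. For $i=0,\dots,k-2$, $\mathbb{C}^n=\bigoplus_{p\in J_i}V^{(i)}_p$ is the decomposition into simultaneous eigenspaces of $(T_{i+1},\dots,T_{k-1})$, $\pi_i:J_j\to J_i$ natural; total orders on the $J_i$ fixed with $\pi_{i+1}(p)<\pi_{i+1}(q)\Rightarrow p<q$. $\mathfrak{p}_i^+=\bigoplus_{p\ge q}\mathrm{Hom}(V^{(i)}_p,V^{(i)}_q)$, $\mathfrak{u}_i^+=\bigoplus_{p>q}\mathrm{Hom}(V^{(i)}_p,V^{(i)}_q)$, $\mathfrak{p}^+_{k-1}=\mathfrak{g}$, $\mathfrak{u}^+_{k-1}=0$.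 $\mathcal{P}_+=\{b\in B_k:b_i\in\mathfrak{p}_i^+\ (1\le i\le k-1)\}$ (a subgroup), $\mathfrak{U}_-^*=\{\sum_{i=1}^{k-1}X_iz^{-i-1}dz:X_i\in\mathfrak{u}_i^+\}$. *)

From HB Require Import structures.
From mathcomp Require Import Rstruct.
From mathcomp Require Import all_boot all_order all_algebra.
From mathcomp Require Import complex.
Set Implicit Arguments. Unset Strict Implicit. Unset Printing Implicit Defensive.
Import Order.TTheory GRing.Theory Num.Theory.
Local Open Scope ring_scope.

Definition C : Type := (Rdefinitions.R)[i].

Section Defs.
Variables (n k : nat).

(* Truncated power series / Laurent coefficient sequences with values in gl_n(C). *)
Definition series := nat -> 'M[C]_n.

Definition sone : series := fun l => if l == 0%N then 1%:M else 0.

Definition smul (a c : series) : series :=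
  fun l => \sum_(j < l.+1) a j *m c (l - j)%N.

(* inverse of b in GL_n(C[z]/(z^k)) when b_0 = 1:  b^{-1} = sum_{m<k} (1-b)^m  (mod z^k) *)
Definition sinv (b : series) : series :=
  fun l => \sum_(m < k) (iter m (smul (fun l => sone l - b l)) sone) l.

(* coadjoint action of b in B_k on B = sum_{i=1}^{k-1} X_i z^{-i-1} dz in b_k^*:
   the coefficient of z^{-i-1}dz in b B b^{-1}, i.e. sum_{p+q+i<=k-1} b_p X_{i+p+q} c_q. *)
Definition coad (b X : series) : series :=
  fun i => \sum_(p < k) \sum_(q < k)
     let p := nat_of_ord p in let q := nat_of_ord q in
     (if (p + q + i < k)%N then b p *m X (i + p + q)%N *m sinv b q else 0).

(* The Cartan subalgebra t = P (diagonal matrices) P^{-1};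
   T_m = P diag(D m) P^{-1}. *)
Variables (P : 'M[C]_n) (D : nat -> 'rV[C]_n).

Definition Tm (m : nat) : 'M[C]_n := P *m diag_mx (D m) *m invmx P.

(* dT = sum_i (-i T_i) z^{-i-1} dz *)
Definition dT : series := fun i => - (i%:R) *: Tm i.

(* tuple of simultaneous eigenvalues of (T_{i+1},...,T_{k-1}) on the j-th
   eigenvector (j-th column of P) *)
Definition tup (i : nat) (j : 'I_n) : seq C :=
  [seq D m 0 j | m <- iota i.+1 (k - i.+1)].

Definition J (i : nat) : seq (seq C) := [seq tup i j | j <- enum 'I_n].

Definition total_order_on (S : seq (seq C)) (le : rel (seq C)) : Prop :=
  [/\ forall p, p \in S -> le p p,
      forall p q, p \in S -> q \in S -> le p q -> le q p -> p = q,
      forall p q r, p \in S -> q \in S -> r \in S -> le p q -> le q r -> le p r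
    & forall p q, p \in S -> q \in S -> le p q || le q p].

Definition strict (le : rel (seq C)) : rel (seq C) := fun p q => le p q && (p != q).

Variable le : nat -> rel (seq C).

(* p_i^+ = ⊕_{p >= q} Hom(V_p^{(i)}, V_q^{(i)}) ; p_{k-1}^+ = g.
   In the eigenbasis (columns of P), the (r,c) entry is a map V_{tup c} -> V_{tup r}. *)
Definition pplus (i : nat) (A : 'M[C]_n) : bool :=
  if (i < k.-1)%N then
    [forall r : 'I_n, forall c : 'I_n,
       ((invmx P *m A *m P) r c != 0) ==> le i (tup i r) (tup i c)]
  else true.

(* u_i^+ = ⊕_{p > q} Hom(V_p^{(i)}, V_q^{(i)}) ; u_{k-1}^+ = 0. *)
Definition uplus (i : nat) (A : 'M[C]_n) : bool :=
  if (i < k.-1)%N then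
    [forall r : 'I_n, forall c : 'I_n,
       ((invmx P *m A *m P) r c != 0) ==> strict (le i) (tup i r) (tup i c)]
  else A == 0.

Definition inPplus (b : series) : Prop :=
  b 0%N = 1%:M /\ forall i, (0 < i < k)%N -> pplus i (b i).

End Defs.

From HB Require Import structures.
From mathcomp Require Import Rstruct.
From mathcomp Require Import all_boot all_order all_algebra.
From mathcomp Require Import complex.
From mathcomp Require Import zify ring.
Import Order.TTheory GRing.Theory Num.Theory.
Local Open Scope ring_scope.
Set Implicit Arguments. Unset Strict Implicit. Unset Printing Implicit Defensive.

(* Conjugating by P makes every T_m diagonal, and the condition X = Ad*_b dT becomes the
   triangular system X b = b dT in b_k^*.  At level i it expresses X_i - dT_i through the
   commutators [b_q, dT_{i+q}] and the products (X - dT)_{i+q} b_q, q >= 1.  The (r, c) entry of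
   [b_q, dT_m] is b_q(r, c) times the gap between the eigenvalues of T_m on the eigenvectors r
   and c; this gap vanishes beyond the split level of (r, c), the last m at which T_m separates
   r from c, and is nonzero at it.  Hence, for b in P_+, downward induction on i puts every
   X_i - dT_i in u_i^+, the compatibility of the orders carrying strict inequalities down the
   levels.  Conversely, given X, the entry b_p(r, c) is the only unknown of the equation at level
   (split level - p) whose coefficient is that nonzero gap; the resulting recursion is well founded
   on the pair (number of s above r, p), and is realised as the fixed point reached after
   finitely many iterations of one solving step. *)

Lemma sum_antidiagonal (V : zmodType) (K1 K2 N : nat) (g : nat -> nat -> V) :
  (N <= K1)%N -> (N <= K2)%N ->
  \sum_(q < K1) \sum_(q' < K2) (if (q' + q < N)%N then g q' q else 0)
  = \sum_(m < N) \sum_(q' < m.+1) g q' (m - q')%N.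
Proof.
elim: N => [|N IH] h1 h2.
  by rewrite big_ord0; apply: big1 => q _; apply: big1 => q' _.
rewrite big_ord_recr -IH ?(ltnW h1) ?(ltnW h2) //.
have -> : \sum_(q < K1) \sum_(q' < K2) (if (q' + q < N.+1)%N then g q' q else 0)
  = \sum_(q < K1) \sum_(q' < K2) (if (q' + q < N)%N then g q' q else 0)
     + \sum_(q < K1) \sum_(q' < K2) (if (q' + q == N)%N then g q' q else 0).
  rewrite -big_split /=; apply: eq_bigr => q _; rewrite -big_split /=.
  apply: eq_bigr => q' _; rewrite ltnS leq_eqVlt.
  by case: eqP => [->|_] /=; rewrite ?ltnn ?add0r ?addr0.
congr (_ + _); rewrite exchange_big /=.
rewrite [RHS](big_ord_widen K2 (fun q' => g q' (N - q')%N) h2) [RHS]big_mkcond /=.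
apply: eq_bigr => q' _; case: (ltnP q' N.+1) => hq; last first.
  by apply: big1 => q _; case: eqP => // hN; move: hq; rewrite -hN; lia.
have hN : (N - q' < K1)%N by apply: leq_ltn_trans h1; rewrite leq_subr.
rewrite (bigD1 (Ordinal hN)) //= subnKC ?eqxx // big1 ?addr0 // => q /eqP hne.
by case: eqP => // hq'; case: hne; apply: val_inj => /=; rewrite -hq' addKn.
Qed.

Lemma coefM_low (R : nzRingType) (p p' q : {poly R}) l :
  (forall j, (j <= l)%N -> p`_j = p'`_j) -> (p * q)`_l = (p' * q)`_l.
Proof. by move=> h; rewrite !coefM; apply: eq_bigr => j _; rewrite h // -ltnS. Qed.

Lemma addr_eq_subr (V : zmodType) (a x s1 s2 : V) : (a + s1 == x + s2) = (a - x == s2 - s1).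
Proof. by rewrite -subr_eq0 opprD addrACA -(opprB s2) subr_eq0. Qed.

Lemma sumr_neq0 (V : zmodType) (I : finType) (F : I -> V) :
  \sum_i F i != 0 -> exists i, F i != 0.
Proof.
move=> nz; apply/existsP; apply: contraNT nz => /existsPn F0.
by apply/eqP/big1 => i _; apply/eqP/negbNE/F0.
Qed.

Lemma sumr_ord_tail0 (V : zmodType) N p (f : nat -> V) : (p <= N)%N ->
  (forall q, (p <= q < N)%N -> f q = 0) -> \sum_(q < N) f q = \sum_(q < p) f q.
Proof.
move=> pN f0; rewrite -!(big_mkord xpredT) (big_cat_nat (leq0n p) pN) /=.
by rewrite [X in _ + X]big_nat_cond [X in _ + X]big1 ?addr0 // => q /andP [/f0].
Qed.

(* [intertwines k b Y X] is the identity Y b = b X in b_k^*, written coefficientwise. *)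
Definition intertwines (n k : nat) (b Y X : series n) : Prop :=
  forall i, (0 < i < k)%N ->
    \sum_(q < k - i) Y (i + q)%N *m b q = \sum_(p < k - i) b p *m X (i + p)%N.

Section TruncatedSeries.
(* The coefficients of {poly 'M_n} must form a nontrivial ring. *)
Variables (n' k : nat).
Local Notation n := n'.+1.
Local Notation M := 'M[C]_n.
Hypothesis k_gt0 : (0 < k)%N.

Definition spoly (s : series n) : {poly M} := \poly_(j < k) s j.

Lemma smul_coef (x y : series n) l : (l < k)%N -> smul x y l = (spoly x * spoly y)`_l.
Proof.
move=> lk; rewrite coefM /smul; apply: eq_bigr => j _.
have jl : (j <= l)%N by rewrite -ltnS.
by rewrite !coef_poly (leq_ltn_trans jl lk) (leq_ltn_trans (leq_subr _ _) lk) mulmxE.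
Qed.

Variable b : series n.
Hypothesis b0 : b 0%N = 1%:M.

Let a : series n := fun l => sone n l - b l.

Lemma spoly_unipotent : spoly b = 1 - spoly a.
Proof.
apply/polyP => j; rewrite coefB coefC !coef_poly /a /sone.
case: ifP => jk; first by case: eqP => [->|_]; rewrite ?b0 ?subrr ?subr0 ?sub0r ?opprK.
by case: eqP => [j0|_]; [rewrite j0 k_gt0 in jk | rewrite subr0].
Qed.

Lemma coef_exp_lt m l : (l < m)%N -> ((spoly a) ^+ m)`_l = 0.
Proof.
have a0 : (spoly a)`_0 = 0 by rewrite coef_poly k_gt0 /a /sone /= b0 subrr.
elim: m l => [|m IH] l // lm; rewrite exprS coefM; apply: big1 => j _.
case: (posnP j) => [->|jp]; first by rewrite a0 mul0r.
by rewrite IH ?mulr0 //; have := ltn_ord j; lia.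
Qed.

Lemma sinv_coef l : (l < k)%N -> sinv k b l = (\sum_(m < k) spoly a ^+ m)`_l.
Proof.
move=> lk; rewrite /sinv coef_sum; apply: eq_bigr => -[m /= _] _.
elim: m l lk => [|m IH] l lk /=; first by rewrite expr0 coefC /sone.
rewrite exprS smul_coef // !coefM; apply: eq_bigr => j _.
have jl : (l - j < k)%N by apply: leq_ltn_trans lk; apply: leq_subr.
by rewrite [(spoly _)`_(l - j)]coef_poly jl IH.
Qed.

(* The geometric series: (sum_{m<k} a^m)(1 - a) = 1 - a^k, and a^k = 0 mod z^k. *)
Lemma smul_sinv_l m : (m < k)%N -> smul (sinv k b) b m = sone n m.
Proof.
move=> mk; rewrite smul_coef // (@coefM_low _ _ (\sum_(j < k) spoly a ^+ j)); last first.
  by move=> j jm; have jk := leq_ltn_trans jm mk; rewrite coef_poly jk sinv_coef.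
rewrite spoly_unipotent mulrBr mulr1 mulr_suml.
have E (j : 'I_k) : spoly a ^+ j * spoly a = spoly a ^+ j.+1 by rewrite exprSr.
rewrite (eq_bigr _ (fun j _ => E j)).
rewrite -opprB -sumrB -(big_mkord xpredT (fun j => spoly a ^+ j.+1 - spoly a ^+ j)).
rewrite telescope_sumr // expr0 opprB.
by rewrite coefB coefC coef_exp_lt // subr0 /sone; case: (m == 0%N).
Qed.

Lemma coad_intertwines X : intertwines k b (coad k b X) X.
Proof.
move=> i /andP [i_gt0 ik]; set c := sinv k b.
transitivity (\sum_(p < k) b p *m \sum_(q < k - i) \sum_(q' < k)
    (if (q' + q < k - i - p)%N then X (i + p + (q' + q))%N *m c q' *m b q else 0)).
  rewrite /coad; under eq_bigr => q _ do rewrite mulmx_suml.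
  under eq_bigr => q _ do under eq_bigr => p _ do rewrite mulmx_suml.
  rewrite exchange_big /=; apply: eq_bigr => p _; rewrite mulmx_sumr.
  apply: eq_bigr => q _; rewrite mulmx_sumr; apply: eq_bigr => q' _ /=.
  case: ifP => h1; case: ifP => h2; try by exfalso; move: h1 h2; lia.
    by rewrite !mulmxA (_ : (i + q + p + q' = i + p + (q' + q))%N) //; lia.
  by rewrite mul0mx mulmx0.
rewrite (big_ord_widen k (fun p => b p *m X (i + p)%N) (leq_subr i k)) [RHS]big_mkcond.
apply: eq_bigr => p _; case: ifP => hp; last first.
  rewrite big1 ?mulmx0 // => q _; apply: big1 => q' _; case: ifP => //; lia.
congr (_ *m _); rewrite (@sum_antidiagonal _ _ _ _
  (fun q' q => X (i + p + (q' + q))%N *m c q' *m b q)); last 2 first.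
- exact: leq_subr.
- by apply: leq_trans (leq_subr _ _) (leq_subr _ _).
transitivity (\sum_(m < k - i - p) X (i + p + m)%N *m sone n m).
  apply: eq_bigr => m _; rewrite -smul_sinv_l; last by have := ltn_ord m; lia.
  rewrite /smul mulmx_sumr; apply: eq_bigr => q' _.
  by rewrite subnKC ?mulmxA // -ltnS.
rewrite (_ : (k - i - p = (k - i - p).-1.+1)%N); last by lia.
rewrite big_ord_recl big1 => [|m _]; last by rewrite mulmx0.
by rewrite addr0 addn0 mulmx1.
Qed.

End TruncatedSeries.

Section Intertwining.
Variables (n k : nat) (b : series n).
Hypothesis b0 : b 0%N = 1%:M.

Definition intertwining_rhs (X Y : series n) (i : nat) : 'M[C]_n :=
  \sum_(q < k - i - 1) (b q.+1 *m X (i + q.+1)%N - X (i + q.+1)%N *m b q.+1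
      - (Y (i + q.+1)%N - X (i + q.+1)%N) *m b q.+1).

Lemma intertwining_level X Y i : (0 < i < k)%N ->
  (\sum_(q < k - i) Y (i + q)%N *m b q = \sum_(p < k - i) b p *m X (i + p)%N) <->
  Y i - X i = intertwining_rhs X Y i.
Proof.
move=> hi; rewrite /intertwining_rhs; set N := (k - i - 1)%N.
rewrite (_ : (k - i = N.+1)%N); last by rewrite /N; lia.
rewrite !big_ord_recl !addn0 b0 mulmx1 mul1mx.
have E (q : 'I_N) : b q.+1 *m X (i + q.+1)%N - X (i + q.+1)%N *m b q.+1
    - (Y (i + q.+1)%N - X (i + q.+1)%N) *m b q.+1
  = b q.+1 *m X (i + q.+1)%N - Y (i + q.+1)%N *m b q.+1.
  by rewrite mulmxBl opprB addrA subrK.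
rewrite (eq_bigr _ (fun q _ => E q)) sumrB.
split=> e; apply/eqP; last by rewrite (addr_eq_subr (Y i)) e.
by move/eqP: e; rewrite (addr_eq_subr (Y i)).
Qed.

Lemma intertwines_unique X Y Y' : intertwines k b Y X -> intertwines k b Y' X ->
  forall i, (0 < i < k)%N -> Y i = Y' i.
Proof.
move=> hY hY' i hi; have [d] := ubnP (k - i); elim: d i hi => // d IH i hi hd.
apply: (addIr (- X i)).
rewrite ((intertwining_level X Y hi).1 (hY i hi)) ((intertwining_level X Y' hi).1 (hY' i hi)).
apply: eq_bigr => q _; rewrite IH //; have := ltn_ord q; lia.
Qed.

End Intertwining.

Lemma coad_eq_iff n k (b X Y : series n) : (0 < k)%N -> b 0%N = 1%:M ->
  (forall i, (0 < i < k)%N -> coad k b X i = Y i) <-> intertwines k b Y X.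
Proof.
case: n b X Y => [|n'] b X Y k_gt0 b0.
  by split=> _ i _; apply/matrixP => -[].
split=> [e|hY].
  move=> i hi; rewrite -(coad_intertwines k_gt0 b0 X hi).
  by apply: eq_bigr => q _; rewrite e //; have := ltn_ord q; lia.
move=> i hi; exact: (intertwines_unique b0 (coad_intertwines k_gt0 b0 X) hY hi).
Qed.

Section Conjugation.
Variables (n : nat) (V : 'M[C]_n).
Hypothesis V_unit : V \in unitmx.
Local Notation cj := (conjmx V).

Lemma conjmx_mul A B : cj (A *m B) = cj A *m cj B.
Proof. by rewrite !conjumx // !mulmxA mulmxKV. Qed.

Lemma conjmx_sub A B : cj (A - B) = cj A - cj B.
Proof. by rewrite /conjmx mulmxBr mulmxBl. Qed.

Lemma conjmx_sum m (F : 'I_m -> 'M[C]_n) : cj (\sum_(j < m) F j) = \sum_(j < m) cj (F j).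
Proof. by rewrite /conjmx mulmx_sumr mulmx_suml. Qed.

Lemma conjmx_inj : injective cj.
Proof. by move=> A B e; rewrite -(conjmxK A V_unit) e conjmxK. Qed.

Lemma intertwines_conjmx k (b Y X b' Y' X' : series n) :
  (forall p, cj (b p) = b' p) -> (forall p, cj (Y p) = Y' p) -> (forall p, cj (X p) = X' p) ->
  intertwines k b Y X <-> intertwines k b' Y' X'.
Proof.
move=> eb eY eX.
have EY i : cj (\sum_(q < k - i) Y (i + q)%N *m b q) = \sum_(q < k - i) Y' (i + q)%N *m b' q.
  by rewrite conjmx_sum; apply: eq_bigr => q _; rewrite conjmx_mul eY eb.
have EX i : cj (\sum_(p < k - i) b p *m X (i + p)%N) = \sum_(p < k - i) b' p *m X' (i + p)%N.
  by rewrite conjmx_sum; apply: eq_bigr => p _; rewrite conjmx_mul eX eb.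
split=> h i hi; first by rewrite -EY -EX h.
by apply: conjmx_inj; rewrite EY EX h.
Qed.

End Conjugation.

Definition supported n (A : 'M[C]_n) (S : 'I_n -> 'I_n -> bool) : Prop :=
  forall r c, A r c != 0 -> S r c.

Section SplitLevel.
Variables (n k : nat) (D : nat -> 'rV[C]_n).

(* The largest m < k at which T_m separates the eigenvectors r and c (0 if there is none). *)
Definition split_level (r c : 'I_n) : nat := \max_(m < k | D m 0 r != D m 0 c) m.

Lemma split_level_lt r c : (0 < k)%N -> (split_level r c < k)%N.
Proof.
move=> k_gt0; rewrite -[k]prednK // ltnS; apply/bigmax_leqP => m _.
by rewrite -ltnS prednK.
Qed.

Lemma split_level_ge (m : nat) r c : (m < k)%N -> D m 0 r != D m 0 c -> (m <= split_level r c)%N.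
Proof. by move=> mk; exact: (leq_bigmax_cond (Ordinal mk)). Qed.

Lemma eigen_eq_above m r c : (split_level r c < m < k)%N -> D m 0 r = D m 0 c.
Proof.
case/andP=> lt_m mk; apply/eqP; apply: contraTT lt_m => neq.
by rewrite -leqNgt split_level_ge.
Qed.

Lemma eigen_neq_split_level r c :
  (0 < split_level r c)%N -> D (split_level r c) 0 r != D (split_level r c) 0 c.
Proof.
rewrite /split_level; case: (pickP (fun m : 'I_k => D m 0 r != D m 0 c)) => [m0 hm0 _|none].
  by rewrite (bigop.bigmax_eq_arg m0 hm0); case: arg_maxnP.
by rewrite big_pred0.
Qed.

Lemma tup_eq_split_level j r c : (tup k D j r == tup k D j c) = (split_level r c <= j)%N.
Proof.
apply/eqP/bigmax_leqP => [e m neq|le_j].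
  rewrite leqNgt; apply: contra neq => jm; apply/eqP.
  by move/eq_in_map: e; apply; rewrite mem_iota; have := ltn_ord m; lia.
apply/eq_in_map => m; rewrite mem_iota => hm; apply/eqP.
have mk : (m < k)%N by lia.
by case: eqVneq => // /(le_j (Ordinal mk)) /=; lia.
Qed.

Lemma tupS j r : tup k D j.+1 r = behead (tup k D j r).
Proof.
rewrite /tup; case: (ltnP j.+1 k) => h.
  by rewrite (_ : (k - j.+1 = (k - j.+2).+1)%N) //; lia.
have -> : (k - j.+1 = 0)%N by lia.
by have -> : (k - j.+2 = 0)%N by lia.
Qed.

End SplitLevel.

Section LevelOrders.
Variables (n k : nat) (D : nat -> 'rV[C]_n) (le : nat -> rel (seq C)).
Hypothesis k_gt1 : (1 < k)%N.
Hypothesis le_total : forall i, (i < k.-1)%N -> total_order_on (J k D i) (le i).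
Hypothesis le_compat : forall i, (i.+1 < k.-1)%N -> forall p q, p \in J k D i -> q \in J k D i ->
  strict (le i.+1) (behead p) (behead q) -> strict (le i) p q.

Local Notation T j r := (tup k D j r).
Local Notation level := (split_level k D).

Definition upper i (r c : 'I_n) : bool := (i < k.-1)%N && strict (le i) (T i r) (T i c).
Definition parabolic i (r c : 'I_n) : bool := (T i r == T i c) || upper i r c.

Lemma tup_in_J i r : T i r \in J k D i.
Proof. exact: map_f (mem_enum _ _). Qed.

Lemma le_parabolic i r c : (i < k.-1)%N -> le i (T i r) (T i c) = parabolic i r c.
Proof.
move=> ik; have [refl _ _ _] := le_total ik.
by rewrite /parabolic /upper ik /strict; case: eqP => [->|_]; rewrite ?refl ?tup_in_J ?andbT.
Qed.

Lemma upper_irr i r : ~~ upper i r r.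
Proof. by rewrite /upper /strict eqxx !andbF. Qed.

Lemma upper_level i r c : upper i r c -> (i < level r c)%N.
Proof. by case/and3P=> _ _; rewrite ltnNge -tup_eq_split_level. Qed.

Lemma upper_mono i j r c : (i <= j)%N -> upper j r c -> upper i r c.
Proof.
elim: j => [|j IH] ij; first by rewrite (_ : i = 0%N) //; lia.
case: (eqVneq i j.+1) => [-> //|ne] /andP [jk hs]; apply: IH; first by lia.
apply/andP; split; first by lia.
by apply: (le_compat jk (tup_in_J j r) (tup_in_J j c)); rewrite -!tupS.
Qed.

Lemma upper_trans i r s c : upper i r s -> upper i s c -> upper i r c.
Proof.
case/andP=> ik /andP [le_rs ne_rs] /andP [_ /andP [le_sc _]].
have [_ anti trans _] := le_total ik.
rewrite /upper ik /strict (trans _ _ _ (tup_in_J _ _) (tup_in_J _ _) (tup_in_J _ _) le_rs le_sc).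
apply: contra ne_rs => /eqP e; rewrite -e in le_sc.
by rewrite (anti _ _ (tup_in_J _ _) (tup_in_J _ _) le_rs le_sc).
Qed.

Lemma upperE i r c : upper i r c = upper 0 r c && (i < level r c)%N.
Proof.
apply/idP/andP => [u|[u0 il]]; first by split; [apply: upper_mono u|apply: upper_level].
have ik : (i < k.-1)%N by have := split_level_lt D r c (ltnW k_gt1); lia.
have ne : T i r != T i c by rewrite tup_eq_split_level -ltnNge.
have [_ _ _ tot] := le_total ik.
case/orP: (tot _ _ (tup_in_J i r) (tup_in_J i c)) => hle; first by rewrite /upper ik /strict hle ne.
have u0' : upper 0 c r by apply: (@upper_mono _ i) => //; rewrite /upper ik /strict hle eq_sym ne.
by have := upper_irr 0 r; rewrite (upper_trans u0 u0').
Qed.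

Lemma parabolic_mono i j r c : (i <= j)%N -> parabolic i r c -> parabolic j r c.
Proof.
move=> ij; rewrite /parabolic !tup_eq_split_level (upperE j) (upperE i).
case: (upper 0 r c) => /=; lia.
Qed.

Lemma upper_parabolic i q r s c : upper (i + q) r s -> parabolic q s c -> upper i r c.
Proof.
move=> urs /(parabolic_mono (leq_addl i q)) /orP [/eqP e|usc].
  by apply: upper_mono (leq_addr q i) _; rewrite /upper -e.
exact: upper_mono (leq_addr q i) (upper_trans urs usc).
Qed.

Lemma upper_eigen_gap i p r c : (0 < i)%N -> (0 < p)%N -> parabolic p r c ->
  (i + p < k)%N -> D (i + p) 0 r != D (i + p) 0 c -> upper i r c.
Proof.
move=> i_gt0 p_gt0 prc ipk neq; have ge := split_level_ge ipk neq.
move: prc; rewrite /parabolic tup_eq_split_level (upperE p) (upperE i).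
case: (upper 0 r c) => /=; lia.
Qed.

Definition dT_diag m : 'M[C]_n := - (m%:R) *: diag_mx (D m).
Definition eigen_gap m (r c : 'I_n) : C := m%:R * (D m 0 r - D m 0 c).

Lemma commutator_dT_diag (A : 'M[C]_n) m r c :
  (A *m dT_diag m - dT_diag m *m A) r c = A r c * eigen_gap m r c.
Proof.
rewrite /dT_diag -scalemxAr -scalemxAl mul_mx_diag mul_diag_mx !mxE /eigen_gap.
by ring.
Qed.

Lemma eigen_gap_neq m r c : eigen_gap m r c != 0 -> D m 0 r != D m 0 c.
Proof. by apply: contraNneq => e; rewrite /eigen_gap e subrr mulr0. Qed.

Lemma eigen_gap_above m r c : (level r c < m < k)%N -> eigen_gap m r c = 0.
Proof. by move=> hm; rewrite /eigen_gap (eigen_eq_above hm) subrr mulr0. Qed.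

Lemma eigen_gap_level r c : upper 0 r c -> eigen_gap (level r c) r c != 0.
Proof.
move/upper_level => lvl; apply: mulf_neq0; first by rewrite pnatr_eq0 -lt0n.
by rewrite subr_eq0 eigen_neq_split_level.
Qed.

Lemma intertwining_rhs_diag b Y i r c :
  intertwining_rhs k b dT_diag Y i r c =
  \sum_(q < k - i - 1) (b q.+1 r c * eigen_gap (i + q.+1) r c
    - \sum_s (Y (i + q.+1)%N - dT_diag (i + q.+1)%N) r s * b q.+1 s c).
Proof.
rewrite summxE; apply: eq_bigr => q _.
by rewrite mxE commutator_dT_diag mxE [in LHS]mxE.
Qed.

Lemma intertwines_diag_upper (b Y : series n) : b 0%N = 1%:M ->
  (forall p, (0 < p < k)%N -> supported (b p) (parabolic p)) ->
  intertwines k b Y dT_diag ->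
  forall i, (0 < i < k)%N -> supported (Y i - dT_diag i) (upper i).
Proof.
move=> b0 b_par hint i hi; have [d] := ubnP (k - i); elim: d i hi => // d IH i hi hd r c.
rewrite ((intertwining_level b0 _ _ hi).1 (hint i hi)) intertwining_rhs_diag.
case/sumr_neq0 => q; have hq : (0 < i + q.+1 < k)%N by have := ltn_ord q; lia.
have bq_par : supported (b q.+1) (parabolic q.+1) by apply: b_par; lia.
case: (eqVneq (b q.+1 r c * eigen_gap (i + q.+1) r c) 0) => [->|].
  rewrite sub0r oppr_eq0 => /sumr_neq0 [s]; rewrite mulf_eq0 negb_or => /andP [zrs bsc].
  have urs : upper (i + q.+1) r s by apply: (IH _ hq _ r s zrs); lia.
  exact: upper_parabolic urs (bq_par s c bsc).
rewrite mulf_eq0 negb_or => /andP [brc /eigen_gap_neq gap] _.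
by apply: upper_eigen_gap (bq_par r c brc) _ gap; lia.
Qed.

Section Construction.
Variable W : series n.
Hypothesis W_upper : forall i, (0 < i < k)%N -> supported (W i - dT_diag i) (upper i).

Local Notation Z i := (W i%N - dT_diag i%N).

Definition active p (r c : 'I_n) : bool := upper 0 r c && (0 < p < level r c)%N.

Lemma active_parabolic p r c : active p r c -> parabolic p r c.
Proof. by case/andP=> u0 /andP [_ plt]; rewrite /parabolic upperE u0 plt orbT. Qed.

(* The level (level r c - p) equation of [intertwining_level], solved for the entry (r, c) of b_p,
   whose coefficient there is the nonzero gap at the split level. *)
Definition solve_step (u : nat -> 'I_n -> 'I_n -> C) p r c : C :=
  let i := (level r c - p)%N in
  if active p r c then
    (Z i r c + \sum_(q < k - i - 1) \sum_s Z (i + q.+1)%N r s * u q.+1 s c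
       - \sum_(q < p.-1) u q.+1 r c * eigen_gap (i + q.+1) r c) / eigen_gap (level r c) r c
  else 0.

Definition approx N := iter N solve_step (fun _ _ _ => 0).

Definition depth r := #|[set s | upper 0 r s]|.

Lemma depth_lt r s : upper 0 r s -> (depth s < depth r)%N.
Proof.
move=> urs; apply: proper_card; apply/properP; split.
  by apply/subsetP => t; rewrite !inE; apply: upper_trans urs.
by exists s; rewrite !inE ?urs ?upper_irr.
Qed.

Lemma depth_bound r : (depth r < n)%N.
Proof.
rewrite -[n]card_ord; apply: proper_card; apply/properP; split; first exact: subset_predT.
by exists r; rewrite ?inE ?upper_irr.
Qed.

Lemma approx_inactive N p r c : ~~ active p r c -> approx N p r c = 0.
Proof. by case: N => //= N na; rewrite /solve_step (negbTE na). Qed.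

(* solve_step at (p, r, c) reads only entries (q, s, c) with [upper 0 r s] and (q, r, c) with
   q < p. *)
Lemma approx_stable N p r c : (depth r * k + p < N)%N -> approx N.+1 p r c = approx N p r c.
Proof.
elim: N p r c => // N IH p r c hN.
rewrite [LHS]/approx iterS -/(approx N.+1) [RHS]/approx iterS -/(approx N) /solve_step.
case: ifP => // /andP [u0 /andP [p_gt0 plt]]; have lk := split_level_lt D r c (ltnW k_gt1).
congr (_ / _); congr (_ + _ - _).
  apply: eq_bigr => q _; apply: eq_bigr => s _.
  have [->|nz] := eqVneq (Z (level r c - p + q.+1)%N r s) 0; first by rewrite !mul0r.
  have hq := ltn_ord q; have hi : (0 < level r c - p + q.+1 < k)%N by lia.
  have := depth_lt (upper_mono (leq0n _) (W_upper hi nz)) => ds.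
  by rewrite IH //; nia.
by apply: eq_bigr => q _; rewrite IH //; have := ltn_ord q; lia.
Qed.

Definition sol := approx (n * k).

Lemma sol_fixed p r c : solve_step sol p r c = sol p r c.
Proof.
case: (boolP (active p r c)) => [act|na];
  last by rewrite /solve_step (negbTE na) /sol approx_inactive.
have lk := split_level_lt D r c (ltnW k_gt1); have := depth_bound r.
case/andP: act => _ /andP [_ plt] dn.
by rewrite -[LHS]/(approx (n * k).+1 p r c) approx_stable //; nia.
Qed.

Lemma sol_active p r c : sol p r c != 0 -> active p r c.
Proof. by apply: contraR => na; rewrite /sol approx_inactive. Qed.

Definition bsol p : 'M[C]_n := if p == 0%N then 1%:M else \matrix_(r, c) sol p r c.

Lemma bsolE p r c : (0 < p)%N -> bsol p r c = sol p r c.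
Proof. by case: p => // p _; rewrite /bsol mxE. Qed.

Lemma bsol_parabolic p : (0 < p)%N -> supported (bsol p) (parabolic p).
Proof. by move=> p_gt0 r c; rewrite bsolE // => /sol_active/active_parabolic. Qed.

Lemma bsol_intertwines : intertwines k bsol W dT_diag.
Proof.
move=> i hi; have b0 : bsol 0 = 1%:M by [].
apply/(intertwining_level b0 dT_diag W hi)/matrixP => r c.
rewrite intertwining_rhs_diag.
have E (q : 'I_(k - i - 1)) :
    bsol q.+1 r c * eigen_gap (i + q.+1) r c - \sum_s Z (i + q.+1) r s * bsol q.+1 s c
  = sol q.+1 r c * eigen_gap (i + q.+1) r c - \sum_s Z (i + q.+1) r s * sol q.+1 s c.
  by rewrite bsolE //; congr (_ - _); apply: eq_bigr => s _; rewrite bsolE.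
rewrite (eq_bigr _ (fun q _ => E q)) sumrB; have lk := split_level_lt D r c (ltnW k_gt1).
case: (boolP (upper 0 r c && (i < level r c)%N)) => [/andP [u0 ilt]|not_u].
  set p := (level r c - i)%N; have act : active p r c by rewrite /active u0; lia.
  have := sol_fixed p r c; rewrite /solve_step act (_ : (level r c - p = i)%N); last by lia.
  move=> fix_p.
  rewrite (@sumr_ord_tail0 _ _ p (fun q => sol q.+1 r c * eigen_gap (i + q.+1) r c)).
  - have p_eq : p = p.-1.+1 by lia.
    have ip : (i + p.-1.+1 = level r c)%N by lia.
    rewrite [in \sum_(q < p) _]p_eq big_ord_recr /= ip -p_eq -fix_p divfK ?eigen_gap_level //.
    by rewrite [_ + (_ - _)]addrC subrK addrK.
  - by lia.
  - by move=> q hq; rewrite eigen_gap_above ?mulr0 //; lia.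
have Z0 : Z i r c = 0.
  by apply/eqP; apply: contraNT not_u => /(W_upper hi); rewrite upperE.
rewrite Z0 !big1 ?subrr // => q _.
  apply: big1 => s _; have [->|nz] := eqVneq (Z (i + q.+1)%N r s) 0; first by rewrite mul0r.
  have [->|/sol_active/active_parabolic psc] := eqVneq (sol q.+1 s c) 0; first by rewrite mulr0.
  have hq : (0 < i + q.+1 < k)%N by have := ltn_ord q; lia.
  have := upper_parabolic (W_upper hq nz) psc.
  by rewrite upperE; move: not_u; case: (upper 0 r c) => //=; lia.
have [->|/sol_active /andP [u0 _]] := eqVneq (sol q.+1 r c) 0; first by rewrite mul0r.
rewrite eigen_gap_above ?mulr0 //; move: not_u; rewrite u0 /=; have := ltn_ord q; lia.
Qed.

End Construction.

End LevelOrders.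

Section Eigenbasis.
Variables (n k : nat) (P : 'M[C]_n) (D : nat -> 'rV[C]_n) (le : nat -> rel (seq C)).
Hypothesis P_unit : P \in unitmx.
Hypothesis le_total : forall i, (i < k.-1)%N -> total_order_on (J k D i) (le i).
Local Notation cj := (conjmx (invmx P)).
Let Pinv_unit : invmx P \in unitmx. Proof. by rewrite unitmx_inv. Qed.

Lemma pplusE p A : (p < k)%N ->
  pplus k P D le p A <-> supported (cj A) (parabolic k D le p).
Proof.
move=> pk; rewrite /pplus conjVmx //; case: ifP => pk1.
  split=> [/forallP h r c nz|h]; last first.
    by apply/forallP => r; apply/forallP => c; apply/implyP => /h; rewrite le_parabolic.
  by move: (h r) => /forallP /(_ c) /implyP /(_ nz); rewrite le_parabolic.
split=> // _ r c _; apply/orP; left.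
by rewrite /tup (_ : (k - p.+1 = 0)%N) //; lia.
Qed.

Lemma uplusE i A : (i < k)%N ->
  uplus k P D le i A <-> supported (cj A) (upper k D le i).
Proof.
move=> ik; rewrite /uplus conjVmx //; case: ifP => ik1.
  split=> [/forallP h r c nz|h].
    by move: (h r) => /forallP /(_ c) /implyP /(_ nz); rewrite /upper ik1.
  by apply/forallP => r; apply/forallP => c; apply/implyP => /h /andP [].
rewrite -(inj_eq (conjmx_inj Pinv_unit)) conjmx0 conjVmx //.
split=> [/eqP -> r c|h]; first by rewrite mxE eqxx.
apply/eqP/matrixP => r c; rewrite [RHS]mxE; apply/eqP; apply: contraT => /h.
by rewrite /upper ik1.
Qed.

Lemma conjmx_dT m : cj (dT P D m) = dT_diag D m.
Proof.
rewrite conjVmx // /dT /Tm /dT_diag -scalemxAr -scalemxAl; congr (_ *: _).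
by rewrite !mulmxA mulVmx // mul1mx mulmxKV.
Qed.

End Eigenbasis.

Unset Implicit Arguments.

Theorem lemma3p8 (n k : nat) (P : 'M[C]_n) (D : nat -> 'rV[C]_n)
    (le : nat -> rel (seq C)) :
  (1 < k)%N ->
  P \in unitmx ->
  Tm P D k.-1 != 0 ->
  (forall i, (i < k.-1)%N -> total_order_on (J k D i) (le i)) ->
  (forall i, (i.+1 < k.-1)%N -> forall p q, p \in J k D i -> q \in J k D i ->
      strict (le i.+1) (behead p) (behead q) -> strict (le i) p q) ->
  forall X : series n,
    (exists b : series n, inPplus k P D le b /\
        forall i, (0 < i < k)%N -> coad k b (dT P D) i = X i)
    <->
    (forall i, (0 < i < k)%N -> uplus k P D le i (X i - dT P D i)).
Proof.
move=> k_gt1 P_unit _ le_total le_compat X; have k_gt0 : (0 < k)%N by lia.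
have Pinv_unit : invmx P \in unitmx by rewrite unitmx_inv.
have cj_dT := conjmx_dT D P_unit; have cj1 : conjmx (invmx P) 1%:M = 1%:M.
  by rewrite conjmx_scalar ?row_free_unit.
split=> [[b [[b0 b_par] hX]] i hi|X_upper].
  have hint : intertwines k (fun p => conjmx (invmx P) (b p))
      (fun p => conjmx (invmx P) (X p)) (dT_diag D).
    by apply/(intertwines_conjmx Pinv_unit k _ _ cj_dT)/coad_eq_iff.
  apply/(uplusE D le P_unit _ (andP hi).2); rewrite conjmx_sub cj_dT.
  apply: (intertwines_diag_upper k_gt1 le_total le_compat _ _ hint) => //; first by rewrite b0 cj1.
  by move=> p hp; apply/(pplusE P_unit le_total _ (andP hp).2)/b_par.
pose W i := conjmx (invmx P) (X i).
have W_upper i : (0 < i < k)%N -> supported (W i - dT_diag D i) (upper k D le i).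
  by move=> hi; rewrite -cj_dT -conjmx_sub; apply/(uplusE D le P_unit _ (andP hi).2)/X_upper.
pose b p := conjmx P (bsol k D le W p).
have b0 : b 0%N = 1%:M by rewrite /b /bsol /= conjmx_scalar ?row_free_unit.
have cjb p : conjmx (invmx P) (b p) = bsol k D le W p by rewrite conjmxK.
exists b; split; first split => // p hp.
  apply/(pplusE P_unit le_total _ (andP hp).2); rewrite cjb.
  by apply: (bsol_parabolic k_gt1 le_total le_compat); case/andP: hp.
apply/coad_eq_iff/(intertwines_conjmx Pinv_unit k cjb (fun=> erefl) cj_dT) => //.
exact: (bsol_intertwines k_gt1 le_total le_compat W_upper).
Qed.
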